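(* There exist a sequence $(w_n)_{n\ge1}$ of words over $\{0,1\}$ and a sequence $(\ell_n)_{n\ge1}$ of positive integers such that for every $n$: $|w_n|=2^n$, $\mathrm{even}(w_{n+1})=w_n$, $w_n$ is $\ell_n$-perfect, and $(\ell_n)_{n\ge1}$ is non-decreasing and unbounded. Furthermore, this can be achieved with $w_1=01$.
   Context: For a finite word $z=a_1\cdots a_m$, $\mathrm{even}(z)=a_2a_4\cdots$. For words $w,u$, $|w|^{al}_u=|\{i: w[i..i+|u|-1]=u,\ i\equiv1\bmod|u|\}|$. A finite binary word $w$ is $\ell$-perfect if $|w|$ is a multiple of $\ell$ and every word $u$ of length $\ell$ satisfies $|w|^{al}_u=|w|/(\ell2^\ell)$. *)

From mathcomp Require Import all_boot.
Set Implicit Arguments. Unset Strict Implicit. Unset Printing Implicit Defensive.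

(* Binary words are [seq bool]; letter 0 = false, 1 = true.
   Positions are 0-indexed here: the paper's 1-indexed position i is index i-1. *)

(* even(a_1 ... a_m) = a_2 a_4 ... : letters at 0-indexed odd positions. *)
Definition even_word (z : seq bool) : seq bool :=
  [seq nth false z i | i <- iota 0 (size z) & odd i].

(* |w|^al_u : number of (0-indexed) positions i with i = 0 mod |u|
   (paper: 1-indexed i = 1 mod |u|) such that w[i..i+|u|-1] = u. *)
Definition aligned_count (w u : seq bool) : nat :=
  count (fun i => (i %% size u == 0) && (take (size u) (drop i w) == u))
        (iota 0 (size w)).

(* w is l-perfect: l divides |w| and every word u of length l satisfies
   |w|^al_u = |w| / (l 2^l)  (stated without division, as an exact equality). *)
Definition perfect (l : nat) (w : seq bool) : Prop :=
  l %| size w /\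
  forall u : seq bool, size u = l -> aligned_count w u * (l * 2 ^ l) = size w.

From mathcomp Require Import all_boot.
Set Implicit Arguments. Unset Strict Implicit. Unset Printing Implicit Defensive.

(* Take ell_n = 2^k_n with k_n the largest k such that k + 2^k <= n.  If y is
   L-perfect, w := interleave x y has even(w) = y, and its aligned 2L-blocks are
   the interleavings of the aligned L-blocks of x and y.  Choose the j-th L-block
   of x to be the (r mod 2^L)-th word of length L, where r counts the earlier
   L-blocks of y equal to the j-th one.  Each word b of length L occurs
   c = |y|/(L 2^L) times as a block of y; when 2^L divides c, each label is
   attached to exactly c/2^L of these occurrences, so every word of length 2L
   occurs |w|/(2L 2^(2L)) times and w is 2L-perfect.  For |y| = 2^n and
   L = 2^(k-1) this divisibility is k + 2^k <= n + 1.  When k_(n+1) = k_n we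
   first use that a 2L-perfect word is also L-perfect. *)

Lemma sum_nat_count (T : Type) (a : pred T) s : \sum_(x <- s) a x = count a s.
Proof. by rewrite -sum1_count [RHS]big_mkcond. Qed.

Lemma count_occurrence_ranks (T : eqType) (x0 b : T) (s : seq T) (P : pred nat) :
  count (fun j => (nth x0 s j == b) && P (count_mem b (take j s))) (iota 0 (size s))
  = count P (iota 0 (count_mem b s)).
Proof.
elim/last_ind: s => [|s x IHs] //.
rewrite size_rcons -addn1 iotaD count_cat /= addn0 add0n.
rewrite (eq_in_count (a2 := fun j => (nth x0 s j == b) && P (count_mem b (take j s)))).
  rewrite IHs nth_rcons ltnn eqxx -cats1 take_size_cat // count_cat /= addn0.
  case: (x == b); rewrite ?addn0 //.
  by rewrite iotaD count_cat /= addn0.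
move=> j; rewrite mem_iota => /andP [_ ltjs].
by rewrite /= nth_rcons ltjs -cats1 takel_cat // ltnW.
Qed.

Lemma count_iota_mod M q r : r < M ->
  count (fun t => t %% M == r) (iota 0 (q * M)) = q.
Proof.
move=> ltrM; elim: q => [|q IHq]; first by rewrite mul0n.
rewrite mulSnr iotaD count_cat IHq add0n -[q * M]addn0 iotaDl count_map.
under eq_count => t do rewrite /= modnMDl.
rewrite (eq_in_count (a2 := pred1 r)); last first.
  by move=> t; rewrite mem_iota /= => ltt; rewrite modn_small.
by rewrite count_uniq_mem ?iota_uniq // mem_iota ltrM addn1.
Qed.

Definition words L : seq (seq bool) := map val (enum {: L.-tuple bool}).

Lemma size_words L : size (words L) = 2 ^ L.
Proof. by rewrite size_map -cardE card_tuple card_bool. Qed.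

Lemma mem_words L v : (v \in words L) = (size v == L).
Proof.
apply/mapP/eqP => [[t _ ->]|<-]; first exact: size_tuple.
by exists (in_tuple v); rewrite ?mem_enum.
Qed.

Lemma uniq_words L : uniq (words L).
Proof. by rewrite map_inj_uniq ?enum_uniq //; apply: val_inj. Qed.

Lemma sum_words_eq L (b : bool) (v0 : seq bool) : size v0 = L ->
  \sum_(v <- words L) (b && (v0 == v)) = b.
Proof.
move=> szv0; case: b; last by rewrite big1.
rewrite sum_nat_count (eq_count (a2 := pred1 v0)); last by move=> v; rewrite /= eq_sym.
by rewrite count_uniq_mem ?uniq_words // mem_words szv0 eqxx.
Qed.

Lemma eq_cat_take_drop L (B u v : seq bool) : size B = L + L -> size u = L ->
  (B == u ++ v) = (take L B == u) && (drop L B == v).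
Proof.
move=> szB szu; rewrite -{1}(cat_take_drop L B) eqseq_cat // szu size_takel //.
by rewrite szB leq_addr.
Qed.

Section PrefixSuffixCount.

Variables (L : nat) (bs : seq (seq bool)).
Hypothesis size_bs : {in bs, forall B, size B = L + L}.

Lemma count_take_eq u : size u = L ->
  count (fun B => take L B == u) bs = \sum_(v <- words L) count_mem (u ++ v) bs.
Proof.
move=> szu; rewrite -sum_nat_count.
rewrite (eq_big_seq (fun B => \sum_(v <- words L) ((take L B == u) && (drop L B == v)))).
  rewrite exchange_big; apply: eq_bigr => v _; rewrite -sum_nat_count.
  by apply: eq_big_seq => B /size_bs szB; rewrite /= (eq_cat_take_drop _ szB szu).
by move=> B /size_bs szB; rewrite sum_words_eq // size_drop szB addnK.
Qed.

Lemma count_drop_eq u : size u = L ->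
  count (fun B => drop L B == u) bs = \sum_(v <- words L) count_mem (v ++ u) bs.
Proof.
move=> szu; rewrite -sum_nat_count.
rewrite (eq_big_seq (fun B => \sum_(v <- words L) ((drop L B == u) && (take L B == v)))).
  rewrite exchange_big; apply: eq_big_seq => v; rewrite mem_words => /eqP szv.
  rewrite -sum_nat_count; apply: eq_big_seq => B /size_bs szB.
  by rewrite /= (eq_cat_take_drop _ szB szv) andbC.
by move=> B /size_bs szB; rewrite sum_words_eq // size_takel // szB leq_addr.
Qed.

End PrefixSuffixCount.

Lemma aligned_count_cat B w u : size B = size u -> 0 < size u ->
  aligned_count (B ++ w) u = (B == u) + aligned_count w u.
Proof.
move=> szB u0; rewrite /aligned_count size_cat szB iotaD count_cat; congr (_ + _).
  have -> : iota 0 (size u) = 0 :: iota 1 (size u).-1 by case: (size u) u0.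
  rewrite /= mod0n drop0 take_size_cat // (eq_in_count (a2 := pred0)) ?count_pred0 ?addn0 //.
  move=> i; rewrite mem_iota add1n prednK // => /andP [i0 ltiu].
  by rewrite modn_small ?gtn_eqF.
have -> : iota (0 + size u) (size w) = map (addn (size u)) (iota 0 (size w)).
  by rewrite -iotaDl addn0.
rewrite count_map; apply: eq_count => i /=.
by rewrite modnDl [size u + i]addnC -drop_drop -szB drop_size_cat.
Qed.

Lemma aligned_count_reshape m u w : 0 < size u -> size w = m * size u ->
  aligned_count w u = count_mem u (reshape (nseq m (size u)) w).
Proof.
elim: m w => [|m IHm] w u0 szw; first by move: szw => /size0nil ->.
rewrite -[w in aligned_count w](cat_take_drop (size u)) aligned_count_cat ?size_takel //=.
  by rewrite IHm // size_drop szw mulSn addKn.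
by rewrite szw mulSn leq_addr.
Qed.

Lemma size_mem_reshape m l (w : seq bool) : m * l <= size w ->
  {in reshape (nseq m l) w, forall B, size B = l}.
Proof.
move=> szw B /(map_f (@size bool)).
by rewrite -/(shape _) reshapeKl ?sumn_nseq 1?mulnC // => /nseqP [].
Qed.

Definition blocks l (w : seq bool) := reshape (nseq (size w %/ l) l) w.

Definition balanced L (bs : seq (seq bool)) :=
  forall u, size u = L -> count_mem u bs * 2 ^ L = size bs.

Lemma perfect_balanced l w :
  0 < l -> l %| size w -> perfect l w <-> balanced l (blocks l w).
Proof.
move=> l0 dvd_lw; rewrite /perfect /balanced size_reshape size_nseq.
have acE u : size u = l ->
    (aligned_count w u * (l * 2 ^ l) == size w) =
    (count_mem u (blocks l w) * 2 ^ l == size w %/ l).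
  move=> szu; rewrite -{1}(divnK dvd_lw) [_ * (l * _)]mulnCA [_ %/ l * l]mulnC.
  rewrite eqn_pmul2l //.
  by rewrite (aligned_count_reshape (m := size w %/ l)) ?szu ?divnK.
split=> [[_ pw] u szu | bw]; [|split=> // u szu]; apply/eqP.
  by rewrite -acE ?pw.
by rewrite acE ?bw.
Qed.

Lemma count_reshape_halves m L (w u : seq bool) :
  count_mem u (reshape (nseq (m + m) L) w) =
  count (fun B => take L B == u) (reshape (nseq m (L + L)) w) +
  count (fun B => drop L B == u) (reshape (nseq m (L + L)) w).
Proof.
elim: m w => [|m IHm] w //; rewrite addSn addnS /= IHm.
rewrite take_takel ?leq_addr // -take_drop drop_drop.
by rewrite addnA addnACA.
Qed.

Lemma balanced_sum_words L bs (f : seq bool -> seq bool) :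
  balanced (L + L) bs -> (forall v, size v = L -> size (f v) = L + L) ->
  (\sum_(v <- words L) count_mem (f v) bs) * 2 ^ L = size bs.
Proof.
move=> bal szf; apply/eqP; rewrite -(eqn_pmul2r (expn_gt0 2 L)) -mulnA -expnD big_distrl.
rewrite (eq_big_seq (fun=> size bs)) => [|v]; last by rewrite mem_words => /eqP /szf /bal.
by rewrite big_const_seq count_predT size_words iter_addn_0 mulnC.
Qed.

Lemma balanced_halves m L (w : seq bool) : size w = m * (L + L) ->
  balanced (L + L) (reshape (nseq m (L + L)) w) -> balanced L (reshape (nseq (m + m) L) w).
Proof.
move=> szw bal u szu; have szbs := size_mem_reshape (eq_leq (esym szw)).
rewrite count_reshape_halves count_take_eq ?count_drop_eq // mulnDl.
by rewrite !balanced_sum_words ?size_reshape ?size_nseq // => v szv; rewrite size_cat szu szv.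
Qed.

Lemma perfect_halve L w : 0 < L -> perfect (L + L) w -> perfect L w.
Proof.
move=> L0 pw; have [dvd2 _] := pw; have LL0 : 0 < L + L by rewrite addn_gt0 L0.
have dvd1 : L %| size w by apply: dvdn_trans dvd2; rewrite dvdn_addr.
set m := size w %/ (L + L); have szw : size w = m * (L + L) by rewrite divnK.
apply/(perfect_balanced L0 dvd1); rewrite /blocks.
have -> : size w %/ L = m + m by rewrite szw mulnDr -mulnDl mulnK.
by apply: balanced_halves => //; apply/perfect_balanced.
Qed.

Lemma perfect_pow2_leq k j w : j <= k -> perfect (2 ^ k) w -> perfect (2 ^ j) w.
Proof.
move=> /subnK <-; elim: (k - j) => // i IHi pw.
by apply/IHi/perfect_halve; rewrite ?expn_gt0 // addnn -mul2n -expnS -addSn.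
Qed.

Fixpoint interleave (T : Type) (x y : seq T) : seq T :=
  if (x, y) is (a :: x', b :: y') then [:: a, b & interleave x' y'] else [::].

Section Interleave.

Variable T : Type.
Implicit Types x y : seq T.

Lemma size_interleave x y : size x = size y -> size (interleave x y) = 2 * size x.
Proof. by elim: x y => [|a x IHx] [|b y] //= [/IHx ->]; rewrite mulnS. Qed.

Lemma take_interleave k x y :
  take (2 * k) (interleave x y) = interleave (take k x) (take k y).
Proof.
by elim: k x y => [|k IHk] [|a x] [|b y]; rewrite ?muln0 ?mulnS ?add2n //= IHk.
Qed.

Lemma drop_interleave k x y :
  drop (2 * k) (interleave x y) = interleave (drop k x) (drop k y).
Proof.
elim: k x y => [|k IHk] [|a x] [|b y]; rewrite ?muln0 ?drop0 ?mulnS ?add2n //= ?IHk //.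
by case: (drop k x).
Qed.

Lemma reshape_interleave m L x y :
  reshape (nseq m (2 * L)) (interleave x y) =
  [seq interleave p.1 p.2 | p <- zip (reshape (nseq m L) x) (reshape (nseq m L) y)].
Proof. by elim: m x y => //= m IHm x y; rewrite take_interleave drop_interleave IHm. Qed.

Lemma interleave_split L (u : seq T) : size u = 2 * L ->
  exists a b, [/\ size a = L, size b = L & u = interleave a b].
Proof.
elim: L u => [|L IHL] [|c [|d u]] //=; rewrite ?mulnS //; first by exists [::], [::].
move=> [/IHL [a [b [sza szb ->]]]].
by exists (c :: a), (d :: b); rewrite /= sza szb.
Qed.

End Interleave.

Lemma eq_interleave (T : eqType) (a b a' b' : seq T) :
  size a = size b -> size a' = size b' -> size a = size a' ->
  (interleave a b == interleave a' b') = (a == a') && (b == b').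
Proof.
elim: a b a' b' => [|c a IHa] [|d b] [|c' a'] [|d' b'] //= [szab] [szab'] [szaa'].
by rewrite !eqseq_cons IHa // !andbA; congr (_ && _); rewrite andbAC.
Qed.

Lemma even_word_cons2 a b z : even_word [:: a, b & z] = b :: even_word z.
Proof.
rewrite /even_word /=; congr (_ :: _).
have -> : iota 2 (size z) = map (addn 2) (iota 0 (size z)) by rewrite -iotaDl.
by rewrite filter_map -map_comp (eq_filter (a2 := odd)) // => i /=; rewrite negbK.
Qed.

Lemma even_word_interleave x y : size x = size y -> even_word (interleave x y) = y.
Proof.
by elim: x y => [|a x IHx] [|b y] //= [/IHx exy]; rewrite even_word_cons2 exy.
Qed.

Definition word_of L r := nth [::] (words L) (r %% 2 ^ L).

Lemma size_word_of L r : size (word_of L r) = L.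
Proof. by apply/eqP; rewrite -mem_words mem_nth // size_words ltn_mod expn_gt0. Qed.

Lemma eq_word_of L r a :
  size a = L -> (word_of L r == a) = (r %% 2 ^ L == index a (words L)).
Proof.
move=> sza; have a_in : a \in words L by rewrite mem_words sza.
rewrite -[a in LHS](nth_index [::] a_in) nth_uniq ?uniq_words // size_words.
  by rewrite ltn_mod expn_gt0.
by rewrite -(size_words L) index_mem.
Qed.

Definition labels L (ys : seq (seq bool)) : seq (seq bool) :=
  [seq word_of L (count_mem (nth [::] ys j) (take j ys)) | j <- iota 0 (size ys)].

Definition step L y := interleave (flatten (labels L (blocks L y))) y.

Lemma size_labels L ys : size (labels L ys) = size ys.
Proof. by rewrite size_map size_iota. Qed.

Lemma shape_labels L ys : shape (labels L ys) = nseq (size ys) L.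
Proof.
rewrite -(size_labels L) -(size_map size); apply/all_pred1P/allP.
by move=> _ /mapP [_ /mapP [j _ ->] ->]; rewrite /= size_word_of.
Qed.

Lemma balanced_label_pairs L ys :
  {in ys, forall B, size B = L} -> balanced L ys -> 2 ^ L * 2 ^ L %| size ys ->
  balanced (2 * L) [seq interleave p.1 p.2 | p <- zip (labels L ys) ys].
Proof.
move=> szys bal dvd_ys u szu; have [a [b [sza szb ->]]] := interleave_split szu.
rewrite size_map size_zip size_labels minnn count_map.
rewrite -[X in zip _ X](mkseq_nth [::] ys) zip_map count_map.
set P := fun t => t %% 2 ^ L == index a (words L).
rewrite (eq_in_count (a2 := fun j => (nth [::] ys j == b) && P (count_mem b (take j ys)))).
  rewrite count_occurrence_ranks; have cE : count_mem b ys * 2 ^ L = size ys by apply: bal.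
  have [q cq] : exists q, count_mem b ys = q * 2 ^ L.
    by exists (count_mem b ys %/ 2 ^ L); rewrite divnK // -(dvdn_pmul2r (expn_gt0 2 L)) cE.
  rewrite cq /P count_iota_mod; last by rewrite -(size_words L) index_mem mem_words sza.
  by rewrite -cE cq -mulnA -expnD addnn -mul2n.
move=> j; rewrite mem_iota => /andP [_ ltj] /=.
have szj : size (nth [::] ys j) = L by apply/szys/mem_nth.
rewrite eq_interleave ?szj ?sza ?szb ?size_word_of // andbC.
by case: eqP => //= ->; rewrite eq_word_of.
Qed.

Lemma size_flatten_labels L y :
  L %| size y -> size (flatten (labels L (blocks L y))) = size y.
Proof.
move=> dvd_Ly; rewrite size_flatten shape_labels size_reshape size_nseq sumn_nseq.
by rewrite mulnC divnK.
Qed.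

Lemma size_step L y : L %| size y -> size (step L y) = 2 * size y.
Proof. by move=> dvd_Ly; rewrite size_interleave size_flatten_labels. Qed.

Lemma even_word_step L y : L %| size y -> even_word (step L y) = y.
Proof. by move=> dvd_Ly; rewrite even_word_interleave ?size_flatten_labels. Qed.

Lemma perfect_step L y : 0 < L -> perfect L y -> L * 2 ^ (2 * L) %| size y ->
  perfect (2 * L) (step L y).
Proof.
move=> L0 py dvd_y; have [dvd_Ly _] := py; move/(perfect_balanced L0 dvd_Ly): py => bal.
set m := size y %/ L; have szy : size y = m * L by rewrite divnK.
have szys : size (blocks L y) = m by rewrite size_reshape size_nseq.
have szst := size_step dvd_Ly.
have L2 : 0 < 2 * L by rewrite muln_gt0 L0.
apply/perfect_balanced => //; first by rewrite szst dvdn_pmul2l.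
rewrite /blocks szst szy mulnA divnMr // mulKn // reshape_interleave.
rewrite -[in reshape _ (flatten _)]szys -(shape_labels L) flattenK -/(blocks L y).
apply: balanced_label_pairs => //; first exact: size_mem_reshape (eq_leq (esym szy)).
by rewrite szys -(dvdn_pmul2r L0) -szy -expnD addnn -mul2n mulnC.
Qed.

Definition ell_log n := \max_(k < n | k + 2 ^ k <= n) k.

Lemma leq_ell_log n j : 0 < n -> (j <= ell_log n) = (j + 2 ^ j <= n).
Proof.
move=> n0; apply/idP/idP => [le_j | le_n].
  case: j le_j => [|j] le_j; first by rewrite add0n expn0.
  apply: contraTT le_j; rewrite -!ltnNge ltnS => lt_n.
  apply/bigmax_leqP => k /= le_kn; rewrite leqNgt; apply: contraTN lt_n => lt_jk.
  by rewrite -leqNgt (leq_trans _ le_kn) // leq_add // leq_pexp2l.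
have lt_jn : j < n by apply: leq_trans le_n; rewrite -{1}(addn0 j) ltn_add2l expn_gt0.
exact: (leq_bigmax_cond (Ordinal lt_jn)).
Qed.

Lemma ell_log_gt0 n : 0 < n -> (0 < ell_log n) = (2 < n).
Proof. exact: leq_ell_log n 1. Qed.

Lemma ell_log_bound n : 0 < n -> ell_log n + 2 ^ ell_log n <= n.
Proof. by move=> n0; rewrite -leq_ell_log. Qed.

Lemma leq_ell_log_pred n : 0 < n -> (ell_log n.+1).-1 <= ell_log n.
Proof.
move=> n0; rewrite leq_ell_log //; have := ell_log_bound (ltn0Sn n).
case: (ell_log n.+1) => [|k] bound; first by rewrite add0n expn0.
by rewrite -ltnS (leq_trans _ bound) //= addSn ltnS leq_add2l leq_pexp2l.
Qed.

Lemma ell_log_mono n m : 0 < n -> n <= m -> ell_log n <= ell_log m.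
Proof.
move=> n0 le_nm; rewrite leq_ell_log ?(leq_trans n0) //.
exact: leq_trans (ell_log_bound n0) le_nm.
Qed.

Lemma leq_ell_log_self j : j <= ell_log (j + 2 ^ j).
Proof. by rewrite leq_ell_log ?addn_gt0 ?expn_gt0 ?orbT. Qed.

(* ell_2 = 1 is not of the form 2 * L, so w_2 cannot be produced by [step]. *)
Fixpoint perfect_word n : seq bool :=
  match n with
  | 0 => [::]
  | 1 => [:: false; true]
  | 2 => [:: true; false; false; true]
  | n'.+1 => step (2 ^ (ell_log n).-1) (perfect_word n')
  end.

Lemma perfect_wordS n : 2 <= n ->
  perfect_word n.+1 = step (2 ^ (ell_log n.+1).-1) (perfect_word n).
Proof. by case: n => [|[|n]]. Qed.

Lemma perfect_word_succ n : 2 <= n ->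
  size (perfect_word n) = 2 ^ n -> perfect (2 ^ ell_log n) (perfect_word n) ->
  [/\ size (perfect_word n.+1) = 2 ^ n.+1, even_word (perfect_word n.+1) = perfect_word n
    & perfect (2 ^ ell_log n.+1) (perfect_word n.+1)].
Proof.
move=> n2 szw pw; rewrite perfect_wordS //.
have n0 : 0 < n by apply: leq_trans n2.
have k0 : 0 < ell_log n.+1 by rewrite ell_log_gt0.
have /perfect_pow2_leq /(_ pw) pL := leq_ell_log_pred n0.
have [dvd_Lw _] := pL.
have eL : 2 * 2 ^ (ell_log n.+1).-1 = 2 ^ ell_log n.+1 by rewrite -expnS prednK.
split; [by rewrite size_step // szw expnS | exact: even_word_step |].
rewrite -eL; apply: perfect_step; rewrite ?expn_gt0 // eL szw -expnD dvdn_exp2l //.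
by rewrite -ltnS -addSn prednK // ell_log_bound.
Qed.

Lemma perfect_word_spec n : 0 < n ->
  size (perfect_word n) = 2 ^ n /\ perfect (2 ^ ell_log n) (perfect_word n).
Proof.
elim: n => // n IHn _; have [lt_n2 | le_2n] := ltnP n 2.
  have -> : ell_log n.+1 = 0 by apply/eqP; rewrite -leqn0 leqNgt ell_log_gt0 // -leqNgt.
  by case: n lt_n2 {IHn} => [|[|]] // _; split => //; split => // -[|[] [|]].
have [szw pw] := IHn (ltnW le_2n).
by have [] := perfect_word_succ le_2n szw pw.
Qed.

Lemma even_word_perfect_word n : 0 < n -> even_word (perfect_word n.+1) = perfect_word n.
Proof.
case: n => [|[|n]] // _; have [szw pw] := perfect_word_spec (ltn0Sn n.+1).
by have [] := @perfect_word_succ n.+2 isT szw pw.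
Qed.

Theorem corollary12 :
  exists (w : nat -> seq bool) (l : nat -> nat),
    [/\ forall n, 1 <= n -> [/\ size (w n) = 2 ^ n,
                              even_word (w n.+1) = w n,
                              0 < l n & perfect (l n) (w n)],
        (forall n m, 1 <= n -> n <= m -> l n <= l m),
        (forall B, exists2 n, 1 <= n & B < l n)
      & w 1 = [:: false; true]].
Proof.
exists perfect_word, (fun n => 2 ^ ell_log n); split => //.
- move=> n n0; have [szw pw] := perfect_word_spec n0.
  by rewrite even_word_perfect_word // expn_gt0.
- by move=> n m n0 le_nm; rewrite leq_pexp2l // ell_log_mono.
- move=> B; exists (B + 2 ^ B); first by rewrite addn_gt0 expn_gt0 orbT.
  exact: leq_trans (ltn_expl B (ltnSn 1)) (leq_pexp2l _ (leq_ell_log_self B)).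
Qed.
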